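(* For every $\delta>0$ there exist $n\ge1$, a pool $\mathcal D=\{(p_i,t_i)\}_{i=1}^n$ with $p_i\in[0,1]$, $t_i>0$, and a budget $T>0$, such that the greedy forward selection strategy operating on the usefulness values $u_i=p_i/t_i$ (defined in the context) outputs an ensemble $S$ with majority-voting accuracy $q(S)\le 1/2+\delta$, while there is an index set $\mathcal L\subseteq\{1,\dots,n\}$ with $\sum_{i\in\mathcal L}t_i\le T$ and $q(\mathcal L)\ge 1-\delta$; i.e., its error (optimal constrained accuracy minus output accuracy) can be arbitrarily close to $1/2$.
   Context: A pool consists of candidate members $i=1,\dots,n$, each with accuracy $p_i\in[0,1]$ and cost $t_i>0$; a budget $T>0$ is given; the usefulness of member $i$ is $u_i=p_i/t_i$. For a nonempty index set $\mathcal L$ with $|\mathcal L|=\ell$, the (majority voting) accuracy is $q(\mathcal L)=\sum_{k=\lfloor \ell/2\rfloor+1}^{\ell}\sum_{\mathcal I\subseteq\mathcal L,|\mathcal I|=k}\prod_{i\in\mathcal I}p_i\prod_{j\in\mathcal L\setminus\mathcal I}(1-p_j)$. Greedy forward selection by usefulness: start with $S$ consisting of a single member of maximal usefulness $u_i$; then repeatedly, among the members $j\notin S$ with $\sum_{i\in S}t_i+t_j\le T$, take one of maximal usefulness (ties broken by larger $q(S\cup\{j\})$); if $q(S\cup\{j\})>q(S)$, add $j$ to $S$ and continue, otherwise (or if no such $j$ exists) stop and output $S$. *)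

From HB Require Import structures.
From mathcomp Require Import all_boot all_order all_algebra.
From mathcomp Require Import reals.
Set Implicit Arguments. Unset Strict Implicit. Unset Printing Implicit Defensive.
Import Order.TTheory GRing.Theory Num.Theory.
Local Open Scope ring_scope.

Section Ensemble.
Variables (R : realType) (n : nat) (p t : 'I_n -> R) (T : R).

(* majority-voting accuracy of an index set L (for L = set0 the sum is empty) *)
Definition q (L : {set 'I_n}) : R :=
  \sum_(I : {set 'I_n} | (I \subset L) && (#|L|./2 < #|I|)%N)
     ((\prod_(i in I) p i) * \prod_(j in L :\: I) (1 - p j)).

Definition cost (L : {set 'I_n}) : R := \sum_(i in L) t i.

Definition usefulness (i : 'I_n) : R := p i / t i.

Definition feasible (S : {set 'I_n}) (j : 'I_n) : Prop :=
  j \notin S /\ cost S + t j <= T.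

Definition greedy_pick (S : {set 'I_n}) (j : 'I_n) : Prop :=
  feasible S j /\
  (forall k, feasible S k -> usefulness k <= usefulness j) /\
  (forall k, feasible S k -> usefulness k = usefulness j ->
             q (k |: S) <= q (j |: S)).

(* greedy_from S S' : starting from current ensemble S, some run of the
   greedy procedure stops and outputs S' *)
Inductive greedy_from : {set 'I_n} -> {set 'I_n} -> Prop :=
| greedy_stop_none S :
    (forall j, ~ feasible S j) -> greedy_from S S
| greedy_stop_noimp S j :
    greedy_pick S j -> q (j |: S) <= q S -> greedy_from S S
| greedy_step S j S' :
    greedy_pick S j -> q S < q (j |: S) -> greedy_from (j |: S) S' ->
    greedy_from S S'.

Definition greedy_output (S : {set 'I_n}) : Prop :=
  exists i0, (forall k, usefulness k <= usefulness i0) /\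
             greedy_from [set i0] S.

End Ensemble.

From HB Require Import structures.
From mathcomp Require Import all_boot all_order all_algebra.
From mathcomp Require Import reals.
From mathcomp Require Import lra.
Import Order.TTheory GRing.Theory Num.Theory.
Local Open Scope ring_scope.

(* A coin-flip member of accuracy 1/2 and cost 1/4 has usefulness 2, so greedy
   selection starts with it; a perfect member of accuracy 1 costs the whole
   budget T = 1 and has usefulness only 1.  Once the coin is chosen the perfect
   member no longer fits, so greedy stops at accuracy 1/2, while the perfect
   member alone is a feasible ensemble of accuracy 1. *)

Lemma q_set1 (R : realType) (n : nat) (p : 'I_n -> R) (i : 'I_n) :
  q p [set i] = p i.
Proof.
rewrite /q (big_pred1 [set i]); first by rewrite big_set1 setDv big_set0 mulr1.
move=> I /=; rewrite subset1 cards1 /=.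
have [->|_] /= := eqVneq I [set i]; first by rewrite cards1.
by have [->|] //= := eqVneq I set0; rewrite cards0.
Qed.

Section GreedyStuck.
Variables (R : realType) (n : nat) (p t : 'I_n -> R) (T : R).

Lemma greedy_from_stuck S S' :
  (forall j, ~ feasible t T S j) -> greedy_from p t T S S' -> S' = S.
Proof.
move=> stuck gS; case: gS stuck => // S0 j S1 [feas _] _ _ /(_ j feas) [].
Qed.

Lemma greedy_output_stuck i0 :
  (forall k, k != i0 -> usefulness p t k < usefulness p t i0) ->
  (forall j, ~ feasible t T [set i0] j) ->
  forall S, greedy_output p t T S <-> S = [set i0].
Proof.
move=> top stuck S; split.
  case=> i [max_i gS].
  have i_i0 : i = i0.
    by apply/eqP; apply: contraTT (max_i i0) => /top; rewrite ltNge.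
  by move: gS; rewrite i_i0; apply: greedy_from_stuck.
move->; exists i0; split; last exact: greedy_stop_none.
move=> k; have [-> // | ne_k] := eqVneq k i0.
exact/ltW/top.
Qed.

End GreedyStuck.

Section CoinAndPerfect.
Variable R : realType.

Definition coin : 'I_2 := ord0.
Definition perfect : 'I_2 := ord_max.

Definition pool_accuracy (i : 'I_2) : R := if i == coin then 1 / 2 else 1.
Definition pool_cost (i : 'I_2) : R := if i == coin then 1 / 4 else 1.

Lemma pool_accuracy_bounds i : 0 <= pool_accuracy i <= 1.
Proof. by rewrite /pool_accuracy; case: ifP => _; apply/andP; split; lra. Qed.

Lemma pool_cost_gt0 i : 0 < pool_cost i.
Proof. by rewrite /pool_cost; case: ifP => _; lra. Qed.

Lemma ord2_cases (k : 'I_2) : k = coin \/ k = perfect.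
Proof. by case: k => [[|[|k]] //= lt_k2]; [left|right]; apply/eqP. Qed.

Lemma pool_usefulness_coin : usefulness pool_accuracy pool_cost coin = 2.
Proof. by rewrite /usefulness /pool_accuracy /pool_cost eqxx; lra. Qed.

Lemma pool_usefulness_perfect :
  usefulness pool_accuracy pool_cost perfect = 1.
Proof. by rewrite /usefulness /pool_accuracy /pool_cost /=; lra. Qed.

Lemma coin_most_useful k :
  k != coin -> usefulness pool_accuracy pool_cost k <
               usefulness pool_accuracy pool_cost coin.
Proof.
case: (ord2_cases k) => -> //= _.
by rewrite pool_usefulness_coin pool_usefulness_perfect; lra.
Qed.

Lemma coin_exhausts_budget j : ~ feasible pool_cost 1 [set coin] j.
Proof.
case=> notin_j; rewrite /cost big_set1.
case: (ord2_cases j) notin_j => ->; first by rewrite inE eqxx.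
by rewrite /pool_cost /=; lra.
Qed.

Lemma pool_greedy_output S :
  greedy_output pool_accuracy pool_cost 1 S <-> S = [set coin].
Proof. exact: greedy_output_stuck coin_most_useful coin_exhausts_budget S. Qed.

End CoinAndPerfect.

Theorem corollary1 (R : realType) (delta : R) (hdelta : 0 < delta) :
  exists (n : nat) (p t : 'I_n -> R) (T : R),
    [/\ (0 < n)%N, (forall i, 0 <= p i <= 1), (forall i, 0 < t i) & 0 < T] /\
    (exists S, greedy_output p t T S) /\
    (forall S, greedy_output p t T S -> q p S <= 1 / 2 + delta) /\
    (exists L : {set 'I_n},
       [/\ L != set0, cost t L <= T & 1 - delta <= q p L]).
Proof.
exists 2%N, (@pool_accuracy R), (@pool_cost R), 1; split.
  by split=> //; [apply: pool_accuracy_bounds | apply: pool_cost_gt0].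
split; first by exists [set coin]; apply/pool_greedy_output.
split.
  by move=> S /pool_greedy_output ->; rewrite q_set1 /pool_accuracy eqxx; lra.
exists [set perfect]; split.
- by apply/set0Pn; exists perfect; rewrite inE.
- by rewrite /cost big_set1.
- by rewrite q_set1 /pool_accuracy /=; lra.
Qed.
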